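(* Let $m>0$, $V=[-m/2,m/2]$, and let $F$ be the CDF of a distribution $P\in\mathcal{P}$. Then for every $\ell\in V$, $$|F^{-1}(0.5)-\ell|\le 2m\,|0.5-F(\ell)|.$$
   Context: A distribution $P$ on $V$ with density $f_P$ and CDF $F_P$ is single-peaked at $\ell$ if $f_P(x)\le f_P(y)$ whenever $x\le y\le\ell$ or $x\ge y\ge\ell$. $\mathcal{P}$ is the class of absolutely continuous distributions on $V$ that are single-peaked at their median $F_P^{-1}(0.5)$ (a point $t$ with $F_P(t)=1/2$). *)

From HB Require Import structures.
From mathcomp Require Import all_boot all_order all_algebra.
From mathcomp Require Import all_classical all_reals all_analysis.
Set Implicit Arguments. Unset Strict Implicit. Unset Printing Implicit Defensive.
Import Order.TTheory GRing.Theory Num.Theory.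
Local Open Scope classical_set_scope.
Local Open Scope ring_scope.

Definition Vint (R : realType) (m : R) : set R := `[- (m / 2), m / 2]%classic.

(* f is the (Lebesgue) density of an absolutely continuous probability
   distribution on V: nonnegative, measurable, vanishing outside V,
   total mass 1. *)
Definition is_density_on (R : realType) (m : R) (f : R -> R) : Prop :=
  [/\ measurable_fun setT f,
      (forall x, 0 <= f x),
      (forall x, ~ Vint m x -> f x = 0) &
      (\int[@lebesgue_measure R]_(x in setT) (f x)%:E = 1)%E].

Definition cdf_dens (R : realType) (f : R -> R) (x : R) : R :=
  fine (\int[@lebesgue_measure R]_(y in `]-oo, x]%classic) (f y)%:E).

Definition single_peaked (R : realType) (f : R -> R) (l : R) : Prop :=
  forall x y, (x <= y <= l) || (l <= y <= x) -> f x <= f y.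

(* P belongs to the class \mathcal{P}, with median t: absolutely continuous
   on V, F(t) = 1/2, and single-peaked at t. *)
Definition in_class_P (R : realType) (m : R) (f : R -> R) (t : R) : Prop :=
  [/\ is_density_on m f, cdf_dens f t = 1 / 2 & single_peaked f t].

From mathcomp Require Import all_boot all_order all_algebra.
From mathcomp Require Import all_classical all_reals all_analysis.
From mathcomp Require Import measurable_realfun lra.
Import Order.TTheory GRing.Theory Num.Theory.
Set Implicit Arguments. Unset Strict Implicit.
Local Open Scope classical_set_scope.
Local Open Scope ring_scope.

(* Put c = f l.  If t <= l, single-peakedness gives f >= c on ]t, l] and
   f <= c on [l, m/2], while f = 0 beyond m/2; hence I := F l - 1/2 >= c (l - t)
   and J := 1 - F l <= c (m/2 - l).  As I + J = 1/2,
     (l - t)/2 = (l - t) (I + J) <= (l - t) I + (m/2 - l) c (l - t)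
              <= (m/2 - t) I <= m I,
   the last step because the median t lies in V.  The case l <= t is the
   mirror image. *)

Local Notation mu := (@lebesgue_measure _).

Lemma mass_split_gap_le (R : realFieldType) (a b m c I J : R) :
  0 <= a -> 0 <= b -> a + b <= m -> 0 <= c ->
  c * a <= I -> J <= c * b -> I + J = 1 / 2 -> a <= 2 * m * I.
Proof.
move=> a0 b0 abm c0 caI Jcb IJ.
have I0 : 0 <= I by apply: le_trans caI; rewrite mulr_ge0.
have aJ := ler_wpM2l a0 Jcb.
have bI := ler_wpM2l b0 caI.
have mI := ler_wpM2r I0 abm.
have aIJ : a * (I + J) = a * (1 / 2) by rewrite IJ.
lra.
Qed.

Lemma lebesgue_measure_itv_length (R : realType) (b0 b1 : bool) (u v : R) :
  u <= v -> mu [set` Interval (BSide b0 u) (BSide b1 v)] = (v - u)%:E.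
Proof.
move=> uv; rewrite lebesgue_measure_itv /=.
case: ifPn => [_|]; first by rewrite EFinB.
rewrite lte_fin -leNgt => vu.
by rewrite (@le_anti _ _ u v) ?uv ?vu // subrr.
Qed.

Section integral_bounds.
Context (R : realType) (f : R -> R).

Lemma Rintegral_le_itv_length (D : set R) (u v c : R) :
  measurable D -> D `<=` `[u, v] -> u <= v -> 0 <= c ->
  mu.-integrable D (EFin \o f) -> (forall x, D x -> 0 <= f x <= c) ->
  \int[mu]_(x in D) f x <= c * (v - u).
Proof.
move=> mD Duv uv c0 intf fc.
rewrite -lee_fin /Rintegral fineK ?integrable_fin_num //.
apply: (@le_trans _ _ (\int[mu]_(x in D) c%:E)%E).
  apply: ge0_le_integral => //.
  - by move=> x /fc /andP[f0 _]; rewrite lee_fin.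
  - by case/integrableP: intf.
  - by move=> x /fc /andP[_ fxc]; rewrite lee_fin.
rewrite integral_cst // EFinM.
rewrite -(@lebesgue_measure_itv_length _ true false _ _ uv).
by apply: lee_wpmul2l; rewrite ?lee_fin // le_measure // inE.
Qed.

Lemma Rintegral_ge_itv_length (u v c : R) :
  u <= v -> 0 <= c -> mu.-integrable `]u, v] (EFin \o f) ->
  (forall x, u < x <= v -> c <= f x) ->
  c * (v - u) <= \int[mu]_(x in `]u, v]) f x.
Proof.
move=> uv c0 intf cf.
rewrite -lee_fin /Rintegral fineK ?integrable_fin_num //.
rewrite EFinM -(@lebesgue_measure_itv_length _ false false _ _ uv).
rewrite -(integral_cst mu (measurable_itv `]u, v])).
apply: ge0_le_integral => //; first by case/integrableP: intf.
Qed.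

End integral_bounds.

Section density.
Context (R : realType) (m : R) (f : R -> R).
Hypothesis fd : is_density_on m f.

Lemma density_integrable (D : set R) :
  measurable D -> mu.-integrable D (EFin \o f).
Proof.
case: fd => mf f0 _ f1 mD; apply: (integrableS measurableT) => //.
apply/integrableP; split; first exact/measurable_EFinP.
under eq_integral do rewrite /= ger0_norm //.
by rewrite f1 ltry.
Qed.

Lemma cdf_densE (x : R) : cdf_dens f x = \int[mu]_(y in `]-oo, x]) f y.
Proof. by []. Qed.

Lemma cdf_densB (a b : R) :
  a <= b -> cdf_dens f b - cdf_dens f a = \int[mu]_(x in `]a, b]) f x.
Proof.
move=> ab; rewrite !cdf_densE.
by apply: Rintegral_itvB; rewrite ?bnd_simp //; exact: density_integrable.
Qed.

Lemma cdf_dens_compl (a : R) : 1 - cdf_dens f a = \int[mu]_(x in `]a, +oo[) f x.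
Proof.
have [_ _ _ f1] := fd.
have -> : 1 = \int[mu]_(x in `]-oo, +oo[) f x.
  by rewrite set_itvNyy /Rintegral f1.
rewrite cdf_densE; apply: Rintegral_itvB; rewrite ?bnd_simp //.
exact: density_integrable.
Qed.

Lemma Rintegral_density_setIV (D : set R) :
  \int[mu]_(x in D) f x = \int[mu]_(x in D `&` Vint m) f x.
Proof.
have [_ _ fout _] := fd.
rewrite Rintegral_mkcondr; apply: eq_Rintegral => x _; rewrite patchE.
by case: ifPn => // /negP xV; rewrite fout // => Vx; apply: xV; rewrite inE.
Qed.

Lemma median_in_V (t : R) : cdf_dens f t = 1 / 2 -> Vint m t.
Proof.
move=> Ft; rewrite /Vint /= in_itv /=; apply/andP; split.
- rewrite leNgt; apply/negP => tlo; move: Ft.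
  rewrite cdf_densE Rintegral_density_setIV.
  suff -> : `]-oo, t] `&` Vint m = set0 by rewrite Rintegral_set0; lra.
  apply/seteqP; split => // x []; rewrite /Vint /= !in_itv /=.
  move=> xt /andP[lox _].
  by move: (le_lt_trans lox (le_lt_trans xt tlo)); rewrite ltxx.
- rewrite leNgt; apply/negP => hit.
  have : 1 - cdf_dens f t = 0.
    rewrite cdf_dens_compl Rintegral_density_setIV.
    suff -> : `]t, +oo[ `&` Vint m = set0 by rewrite Rintegral_set0.
    apply/seteqP; split => // x []; rewrite /Vint /= !in_itv /= andbT.
    move=> tx /andP[_ xhi].
    by move: (lt_le_trans (lt_trans hit tx) xhi); rewrite ltxx.
  by rewrite Ft; lra.
Qed.

End density.

Section median.
Context (R : realType) (m : R) (f : R -> R) (t : R).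
Hypotheses (fd : is_density_on m f) (Ft : cdf_dens f t = 1 / 2)
  (sp : single_peaked f t).

Lemma median_le_cdf_dens (l : R) :
  t <= l -> l <= m / 2 -> l - t <= 2 * m * (cdf_dens f l - 1 / 2).
Proof.
move=> t_le_l lhi; have [_ f0 _ _] := fd.
have := median_in_V fd Ft; rewrite /Vint /= in_itv /= => /andP[tlo _].
have mass_tl : f l * (l - t) <= cdf_dens f l - 1 / 2.
  rewrite -Ft (cdf_densB fd) //; apply: Rintegral_ge_itv_length => //.
    exact: (density_integrable fd).
  by move=> x /andP[tx xl]; apply: sp; rewrite (ltW tx) xl orbT.
have mass_tail : 1 - cdf_dens f l <= f l * (m / 2 - l).
  have mD : measurable (`]l, +oo[ `&` Vint m).
    by apply: measurableI; exact: measurable_itv.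
  rewrite (cdf_dens_compl fd) (Rintegral_density_setIV fd).
  apply: Rintegral_le_itv_length => //.
  - by move=> x []; rewrite /Vint /= !in_itv /= andbT => /ltW -> /andP[_ ->].
  - exact: (density_integrable fd).
  move=> x [/=]; rewrite in_itv /= andbT => lx _.
  by rewrite f0; apply: sp; rewrite t_le_l (ltW lx) orbT.
apply: (mass_split_gap_le _ _ _ (f0 l) mass_tl mass_tail); lra.
Qed.

Lemma cdf_dens_le_median (l : R) :
  l <= t -> - (m / 2) <= l -> t - l <= 2 * m * (1 / 2 - cdf_dens f l).
Proof.
move=> l_le_t llo; have [_ f0 _ _] := fd.
have := median_in_V fd Ft; rewrite /Vint /= in_itv /= => /andP[_ thi].
have mass_lt : f l * (t - l) <= 1 / 2 - cdf_dens f l.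
  rewrite -Ft (cdf_densB fd) //; apply: Rintegral_ge_itv_length => //.
    exact: (density_integrable fd).
  by move=> x /andP[lx xt]; apply: sp; rewrite (ltW lx) xt.
have mass_tail : cdf_dens f l <= f l * (l - - (m / 2)).
  have mD : measurable (`]-oo, l] `&` Vint m).
    by apply: measurableI; exact: measurable_itv.
  rewrite cdf_densE (Rintegral_density_setIV fd).
  apply: Rintegral_le_itv_length => //.
  - by move=> x []; rewrite /Vint /= !in_itv /= => -> /andP[-> _].
  - exact: (density_integrable fd).
  move=> x [/=]; rewrite in_itv /= => xl _.
  by rewrite f0; apply: sp; rewrite xl l_le_t.
apply: (mass_split_gap_le _ _ _ (f0 l) mass_lt mass_tail); lra.
Qed.

End median.

Theorem lemma7p17 (R : realType) (m : R) (f : R -> R) (t : R) :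
  0 < m -> in_class_P m f t ->
  forall l : R, Vint m l ->
    `|t - l| <= 2 * m * `|1 / 2 - cdf_dens f l|.
Proof.
move=> m0 [fd Ft sp] l Vl.
have /andP[llo lhi] : - (m / 2) <= l <= m / 2 by rewrite /Vint /= in_itv in Vl.
have m2 : 0 <= 2 * m by rewrite mulr_ge0 // ltW.
have [t_le_l|l_lt_t] := lerP t l.
- apply: le_trans (median_le_cdf_dens fd Ft sp t_le_l lhi) _.
  by rewrite ler_wpM2l // ler_normr opprB lexx orbT.
- apply: le_trans (cdf_dens_le_median fd Ft sp (ltW l_lt_t) llo) _.
  by rewrite ler_wpM2l // ler_norm.
Qed.
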